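(* Consider the gossip dynamics with stubborn agents and block communication probabilities described in the context (with $0<n_{r1}\le n_1$, $0<n_{r2}\le n_2$, $n_{r1}+n_{r2}<n$, $w_s,w_d>0$, $w_s\neq w_d$, $w_s(n_1^2+n_2^2)+2w_dn_1n_2=1$, and fixed stubborn initial vector $\mathbf{x}^s=x^s(0)=[(\mathbf{x}^{s1})^T\ (\mathbf{x}^{s2})^T]^T$, where $\mathbf{x}^{sk}$ stacks the states of stubborn agents of community $k$). Then, with $a_i=w_sn_i+w_dn_{3-i}$ for $i=1,2$, there exist constants $\tilde w_{s1},\tilde w_{s2},\tilde w_d$ depending only on $w_s,w_d,n_{r1},n_{r2}$ such that $$(I-\bar A)^{-1}=\begin{bmatrix}\frac1{a_1}(I_{n_{r1}}-\tilde w_{s1}\mathbf{1}_{n_{r1}}\mathbf{1}_{n_{r1}}^T) & \tilde w_d\mathbf{1}_{n_{r1}}\mathbf{1}_{n_{r2}}^T\\ \tilde w_d\mathbf{1}_{n_{r2}}\mathbf{1}_{n_{r1}}^T & \frac1{a_2}(I_{n_{r2}}-\tilde w_{s2}\mathbf{1}_{n_{r2}}\mathbf{1}_{n_{r2}}^T)\end{bmatrix}$$ (block decomposition by regular agents of community 1, then community 2). Consequently $$\mathbf{x}^r:=(I-\bar A)^{-1}\bar B\mathbf{x}^s=[\chi_1\mathbf{1}_{n_{r1}}^T,\ \chi_2\mathbf{1}_{n_{r2}}^T]^T,$$ where $$\chi_1=\tfrac1\delta(\gamma_{11}\mathbf{1}_{n_{s1}}^T\mathbf{x}^{s1}+\gamma_{12}\mathbf{1}_{n_{s2}}^T\mathbf{x}^{s2}),\qquad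 \chi_2=\tfrac1\delta(\gamma_{21}\mathbf{1}_{n_{s2}}^T\mathbf{x}^{s2}+\gamma_{22}\mathbf{1}_{n_{s1}}^T\mathbf{x}^{s1}),$$ with $\gamma_{11}=w_sw_dn_1+w_d^2n_{r2}+w_s^2n_{s2}$, $\gamma_{12}=w_d(w_dn_1+w_sn_2)$, $\gamma_{21}=w_sw_dn_2+w_d^2n_{r1}+w_s^2n_{s1}$, $\gamma_{22}=w_d(w_dn_2+w_sn_1)$, $\delta=w_s^2n_{s1}n_{s2}+w_sw_d(n_1n_{s1}+n_2n_{s2})+w_d^2(n_1n_2-n_{r1}n_{r2})$, and $\mathbf{1}_{n_{sk}}^T\mathbf{x}^{sk}$ is defined to be $0$ if $n_{sk}=0$.
   Context: Agents $\mathcal{V}=\{1,\dots,n\}$, $n=n_1+n_2$, form two communities $\mathcal{V}_1=\{1,\dots,n_1\}$, $\mathcal{V}_2=\{n_1+1,\dots,n\}$; community $k$ consists of $n_{rk}$ regular agents $\mathcal{V}_{rk}$ and $n_{sk}=n_k-n_{rk}$ stubborn agents $\mathcal{V}_{sk}$; $\mathcal{V}_r=\mathcal{V}_{r1}\cup\mathcal{V}_{r2}$, $\mathcal{V}_s=\mathcal{V}_{s1}\cup\mathcal{V}_{s2}$. Let $w_{ij}=w_s$ if $i,j$ are in the same community and $w_{ij}=w_d$ otherwise. For $i,j\in\mathcal{V}$ define $R^{ij}=I-\frac12(\mathbf{e}_i-\mathbf{e}_j)(\mathbf{e}_i-\mathbf{e}_j)^T$ if $i,j\in\mathcal{V}_r$;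 $R^{ij}=I-\frac12\mathbf{e}_i(\mathbf{e}_i-\mathbf{e}_j)^T$ if $i\in\mathcal{V}_r,j\in\mathcal{V}_s$; $R^{ij}=I-\frac12\mathbf{e}_j(\mathbf{e}_j-\mathbf{e}_i)^T$ if $i\in\mathcal{V}_s,j\in\mathcal{V}_r$; $R^{ij}=I$ if $i,j\in\mathcal{V}_s$. At each time $t\in\mathbb{N}$, independently, an ordered pair $(i,j)$ is drawn with probability $w_{ij}$ and $R(t)=R^{ij}$; states evolve by $x(t+1)=R(t)x(t)$. With $x^r(t)$, $x^s(t)$ the stacked states of regular and stubborn agents, $x^r(t+1)=A(t)x^r(t)+B(t)x^s(t)$, where $(A(t)\ B(t))$ are the rows of $R(t)$ indexed by regular agents, columns split into regular ($A(t)$) and stubborn ($B(t)$) agents. $\bar A=\mathbb{E}\{A(t)\}$, $\bar B=\mathbb{E}\{B(t)\}$. *)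

From HB Require Import structures.
From mathcomp Require Import all_boot all_order all_algebra.
Import GRing.Theory Num.Theory.
Local Open Scope ring_scope.

(* Agents are indexed by 'I_((nr1 + ns1) + (nr2 + ns2)):
   community 1 = the first n1 = nr1 + ns1 indices, community 2 the last
   n2 = nr2 + ns2 indices; inside community k the regular agents come first,
   then the stubborn ones. *)

Definition is_reg (nr1 ns1 nr2 ns2 : nat) (i : 'I_((nr1 + ns1) + (nr2 + ns2))) : bool :=
  match split i with inl a => (a < nr1)%N | inr b => (b < nr2)%N end.

Definition same_comm (nr1 ns1 nr2 ns2 : nat) (i j : 'I_((nr1 + ns1) + (nr2 + ns2))) : bool :=
  (i < nr1 + ns1)%N == (j < nr1 + ns1)%N.

Definition wgt (R : pzRingType) (nr1 ns1 nr2 ns2 : nat) (ws wd : R)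
    (i j : 'I_((nr1 + ns1) + (nr2 + ns2))) : R :=
  if same_comm nr1 ns1 nr2 ns2 i j then ws else wd.

Definition evec (R : pzRingType) (n : nat) (i : 'I_n) : 'cV[R]_n := delta_mx i 0.

Definition Rmat (R : fieldType) (nr1 ns1 nr2 ns2 : nat)
    (i j : 'I_((nr1 + ns1) + (nr2 + ns2))) : 'M[R]_((nr1 + ns1) + (nr2 + ns2)) :=
  let ri := is_reg nr1 ns1 nr2 ns2 i in
  let rj := is_reg nr1 ns1 nr2 ns2 j in
  let ei := @evec R _ i in
  let ej := @evec R _ j in
  if ri && rj then 1%:M - 2^-1 *: ((ei - ej) *m (ei - ej)^T)
  else if ri && ~~ rj then 1%:M - 2^-1 *: (ei *m (ei - ej)^T)
  else if ~~ ri && rj then 1%:M - 2^-1 *: (ej *m (ej - ei)^T)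
  else 1%:M.

Definition reg_idx (nr1 ns1 nr2 ns2 : nat) (k : 'I_(nr1 + nr2)) :
    'I_((nr1 + ns1) + (nr2 + ns2)) :=
  match split k with
  | inl a => lshift (nr2 + ns2) (lshift ns1 a)
  | inr b => rshift (nr1 + ns1) (lshift ns2 b)
  end.

Definition stub_idx (nr1 ns1 nr2 ns2 : nat) (k : 'I_(ns1 + ns2)) :
    'I_((nr1 + ns1) + (nr2 + ns2)) :=
  match split k with
  | inl a => lshift (nr2 + ns2) (rshift nr1 a)
  | inr b => rshift (nr1 + ns1) (rshift nr2 b)
  end.

Definition Apart (R : pzRingType) (nr1 ns1 nr2 ns2 : nat)
    (M : 'M[R]_((nr1 + ns1) + (nr2 + ns2))) : 'M[R]_(nr1 + nr2) :=
  \matrix_(k, l) M (reg_idx nr1 ns1 nr2 ns2 k) (reg_idx nr1 ns1 nr2 ns2 l).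

Definition Bpart (R : pzRingType) (nr1 ns1 nr2 ns2 : nat)
    (M : 'M[R]_((nr1 + ns1) + (nr2 + ns2))) : 'M[R]_(nr1 + nr2, ns1 + ns2) :=
  \matrix_(k, l) M (reg_idx nr1 ns1 nr2 ns2 k) (stub_idx nr1 ns1 nr2 ns2 l).

(* expectations: the pair (i,j) is drawn with probability w_ij *)
Definition Abar (R : fieldType) (nr1 ns1 nr2 ns2 : nat) (ws wd : R) : 'M[R]_(nr1 + nr2) :=
  \sum_(i : 'I_((nr1 + ns1) + (nr2 + ns2))) \sum_(j : 'I_((nr1 + ns1) + (nr2 + ns2)))
     wgt R nr1 ns1 nr2 ns2 ws wd i j *: Apart R nr1 ns1 nr2 ns2 (Rmat R nr1 ns1 nr2 ns2 i j).

Definition Bbar (R : fieldType) (nr1 ns1 nr2 ns2 : nat) (ws wd : R) :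
    'M[R]_(nr1 + nr2, ns1 + ns2) :=
  \sum_(i : 'I_((nr1 + ns1) + (nr2 + ns2))) \sum_(j : 'I_((nr1 + ns1) + (nr2 + ns2)))
     wgt R nr1 ns1 nr2 ns2 ws wd i j *: Bpart R nr1 ns1 nr2 ns2 (Rmat R nr1 ns1 nr2 ns2 i j).

From HB Require Import structures.
From mathcomp Require Import all_boot all_order all_algebra.
From mathcomp Require Import ring lra zify.
Import Order.TTheory GRing.Theory Num.Theory.

Set Implicit Arguments.
Unset Strict Implicit.
Unset Printing Implicit Defensive.

Local Open Scope ring_scope.

(* Only the rows of regular agents enter A(t) and B(t), and on such a row R^{ij}
   coincides with the symmetric averaging matrix I - (e_i - e_j)(e_i - e_j)^T / 2.
   Averaging over the pairs therefore turns I - Abar into the weighted Laplacian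
   restricted to the regular agents: with J the all-ones matrix, its diagonal
   blocks are a_k I - w_s J and its off-diagonal blocks -w_d J, while Bbar is
   constant on each block.  Matrices of the form a I + b J are closed under
   products, so the inverse of such a 2x2 block matrix has the same shape and
   its coefficients solve a small linear system whose determinant is
   delta = (a_1 - w_s n_r1)(a_2 - w_s n_r2) - w_d^2 n_r1 n_r2; delta > 0 as soon
   as some agent is stubborn.  Applied to the block-constant vector Bbar x^s the
   inverse yields the constant blocks chi_1 and chi_2. *)

Section ScalarConstMx.

Variable R : comPzRingType.

Lemma const_mxD m n (x y : R) : const_mx (x + y) = const_mx x + const_mx y :> 'M_(m, n).
Proof. by apply/matrixP => i j; rewrite !mxE. Qed.

Lemma scalar_sub_const_mx n (a b : R) : a%:M - const_mx b = a%:M + const_mx (- b) :> 'M_n.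
Proof. by apply/matrixP => i j; rewrite !mxE. Qed.

Lemma scale_scalar_sub_const_mx n (a t : R) :
  a *: (1%:M - t *: const_mx 1) = a%:M + const_mx (- (a * t)) :> 'M_n.
Proof. by apply/matrixP => i j; rewrite !mxE; case: (i == j) => /=; ring. Qed.

Lemma mul_const_mx m k n (x y : R) :
  (const_mx x : 'M_(m, k)) *m (const_mx y : 'M_(k, n)) = const_mx (x * y * k%:R).
Proof.
apply/matrixP => i j; rewrite !mxE; under eq_bigr do rewrite !mxE.
by rewrite sumr_const card_ord mulr_natr.
Qed.

Lemma mul_scalar_const_mx_const m n (a b x : R) :
  (a%:M + const_mx b : 'M_m) *m (const_mx x : 'M_(m, n)) = const_mx ((a + b * m%:R) * x).
Proof.
rewrite mulmxDl mul_scalar_mx mul_const_mx scalemx_const -const_mxD.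
by congr const_mx; ring.
Qed.

Lemma mul_const_scalar_const_mx m n (a b x : R) :
  (const_mx x : 'M_(m, n)) *m (a%:M + const_mx b) = const_mx (x * (a + b * n%:R)).
Proof.
rewrite mulmxDr mul_mx_scalar mul_const_mx scalemx_const -const_mxD.
by congr const_mx; ring.
Qed.

Lemma mul_scalar_const_mx n (a b c d : R) :
  (a%:M + const_mx b : 'M_n) *m (c%:M + const_mx d) =
  (a * c)%:M + const_mx (a * d + b * c + b * d * n%:R).
Proof.
rewrite mulmxDr mul_scalar_const_mx_const mul_mx_scalar scalerDr.
rewrite scale_scalar_mx scalemx_const -addrA -const_mxD.
by congr (_%:M + const_mx _); ring.
Qed.

Lemma mul_const_mx_col m k (x : R) (v : 'cV_k) :
  (const_mx x : 'M_(m, k)) *m v = const_mx (x * \sum_l v l 0).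
Proof.
apply/matrixP => i j; rewrite !mxE mulr_sumr; apply: eq_bigr => l _.
by rewrite mxE (ord1 j).
Qed.

End ScalarConstMx.

Section BlockScalarConstInverse.

Variables (R : fieldType) (m1 m2 : nat) (a1 a2 b c : R).

Local Notation d := ((a1 - b * m1%:R) * (a2 - b * m2%:R) - c ^+ 2 * m1%:R * m2%:R).
Local Notation M := (block_mx (a1%:M - const_mx b) (- const_mx c)
                              (- const_mx c) (a2%:M - const_mx b) : 'M_(m1 + m2)).

Hypotheses (a1_neq0 : a1 != 0) (a2_neq0 : a2 != 0) (d_neq0 : d != 0).

Lemma invmx_block_scalar_const :
  let t1 := - (b * (a2 - b * m2%:R) + c ^+ 2 * m2%:R) / d in
  let t2 := - (b * (a1 - b * m1%:R) + c ^+ 2 * m1%:R) / d in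
  M \in unitmx /\
  invmx M = block_mx (a1^-1 *: (1%:M - t1 *: const_mx 1)) (const_mx (c / d))
                     (const_mx (c / d)) (a2^-1 *: (1%:M - t2 *: const_mx 1)).
Proof.
move=> t1 t2; set X := block_mx (a1^-1 *: _) _ _ _.
suff MX : M *m X = 1%:M.
  have [M_unit _] := mulmx1_unit MX.
  by split=> //; rewrite -(mulKmx M_unit X) MX mulmx1.
rewrite /X !scalar_sub_const_mx !scale_scalar_sub_const_mx -!raddfN.
rewrite mulmx_block !mul_scalar_const_mx !mul_scalar_const_mx_const !mul_const_scalar_const_mx.
rewrite !mul_const_mx -!addrA -!const_mxD [X in block_mx _ _ _ X]addrCA -const_mxD.
rewrite !divff // [RHS]scalar_mx_block.
congr block_mx; apply/matrixP => i j; rewrite !mxE ?mulrb; try case: ifP => _.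
all: by rewrite /t1 /t2; field; apply/andP.
Qed.

Lemma invmx_block_scalar_const_mul_col (u1 u2 : R) :
  invmx M *m col_mx (const_mx u1 : 'cV_m1) (const_mx u2 : 'cV_m2) =
  col_mx (const_mx (((a2 - b * m2%:R) * u1 + c * m2%:R * u2) / d))
         (const_mx ((c * m1%:R * u1 + (a1 - b * m1%:R) * u2) / d)).
Proof.
have [_ ->] := invmx_block_scalar_const.
rewrite mul_block_col !scale_scalar_sub_const_mx !mul_scalar_const_mx_const !mul_const_mx.
rewrite -!const_mxD; congr (col_mx (const_mx _) (const_mx _)).
all: by field; apply/andP.
Qed.

End BlockScalarConstInverse.

Lemma sumr_delta (R : pzSemiRingType) (I : finType) (x : I) (F : I -> R) :
  \sum_i (x == i)%:R * F i = F x.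
Proof.
rewrite (bigD1 x) //= eqxx mul1r big1 ?addr0 // => i /negbTE.
by rewrite eq_sym => ->; rewrite mul0r.
Qed.

Lemma sum_sym_weight_diff (R : comPzRingType) (I : finType) (w : I -> I -> R) p q :
  (forall i j, w i j = w j i) ->
  \sum_i \sum_j w i j * (((p == i)%:R - (p == j)%:R) * ((q == i)%:R - (q == j)%:R)) =
  2 * ((p == q)%:R * \sum_j w p j - w p q).
Proof.
move=> w_sym.
have diag j : (p == j)%:R * (q == j)%:R = (p == q)%:R * (p == j)%:R :> R.
  by case: (eqVneq p j) => [->|]; rewrite ?mulr0 ?mul0r // mul1r mulr1 eq_sym.
have inner i : \sum_j w i j * (((p == i)%:R - (p == j)%:R) * ((q == i)%:R - (q == j)%:R)) =
    (p == i)%:R * ((q == i)%:R * \sum_j w i j - w i q) - (q == i)%:R * w i p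
    + (p == q)%:R * w i p.
  rewrite (eq_bigr (fun j => (p == i)%:R * (q == i)%:R * w i j - (p == i)%:R * ((q == j)%:R * w i j)
      - (q == i)%:R * ((p == j)%:R * w i j) + (p == q)%:R * ((p == j)%:R * w i j))).
    by rewrite big_split !sumrB /= -!mulr_sumr !sumr_delta; ring.
  by move=> j _; rewrite (mulrA (p == q)%:R) -diag; ring.
under eq_bigr do rewrite inner.
rewrite big_split sumrB /= !sumr_delta -mulr_sumr.
have -> : \sum_i w i p = \sum_j w p j by apply: eq_bigr => i _; apply: w_sym.
rewrite (w_sym q p) [q == p]eq_sym; ring.
Qed.

Lemma lshift_ltn m n (i : 'I_m) : (lshift n i < m)%N.
Proof. by rewrite /= ltn_ord. Qed.

Lemma rshift_ltnF m n (i : 'I_n) : (rshift m i < m)%N = false.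
Proof. by rewrite /= ltnNge leq_addr. Qed.

Section Gossip.

Variables (nr1 ns1 nr2 ns2 : nat).
Local Notation n1 := (nr1 + ns1)%N.
Local Notation n2 := (nr2 + ns2)%N.
Local Notation agent := 'I_(n1 + n2).
Local Notation reg := (reg_idx nr1 ns1 nr2 ns2).
Local Notation stub := (stub_idx nr1 ns1 nr2 ns2).
Local Notation is_regular := (is_reg nr1 ns1 nr2 ns2).

(* A stubborn agent is never updated, so on a regular row R^{ij} agrees with
   the symmetric averaging matrix I - (e_i - e_j)(e_i - e_j)^T / 2. *)
Lemma Rmat_regular_row (R : fieldType) (i j p q : agent) : is_regular p ->
  Rmat R nr1 ns1 nr2 ns2 i j p q =
  (p == q)%:R - 2^-1 * (((p == i)%:R - (p == j)%:R) * ((q == i)%:R - (q == j)%:R)).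
Proof.
move=> reg_p.
have neq_p x : ~~ is_regular x -> (p == x) = false.
  by apply: contraNF => /eqP <-.
rewrite /Rmat /evec.
case reg_i: (is_regular i); case reg_j: (is_regular j) => /=;
  rewrite !mxE ?big_ord1 ?mxE ?eqxx ?andbT /=.
- by [].
- by rewrite (neq_p j) ?reg_j //=; ring.
- by rewrite (neq_p i) ?reg_i //=; ring.
- by rewrite (neq_p i) ?reg_i // (neq_p j) ?reg_j //=; ring.
Qed.

Variables (R : fieldType) (ws wd : R).
Local Notation w := (wgt R nr1 ns1 nr2 ns2 ws wd).

Lemma wgt_sym (i j : agent) : w i j = w j i.
Proof. by rewrite /wgt /same_comm eq_sym. Qed.

Lemma sum_by_community (V : nmodType) (F : bool -> V) :
  \sum_(i : agent) F (i < n1)%N = F true *+ n1 + F false *+ n2.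
Proof.
rewrite big_split_ord -[in RHS](card_ord n1) -[in RHS](card_ord n2) -!sumr_const.
by congr (_ + _); apply: eq_bigr => i _; rewrite ?lshift_ltn ?rshift_ltnF.
Qed.

Lemma sum_wgt_row (i : agent) :
  \sum_j w i j = if (i < n1)%N then ws * n1%:R + wd * n2%:R else ws * n2%:R + wd * n1%:R.
Proof.
rewrite /wgt /same_comm (sum_by_community (fun b => if (i < n1)%N == b then ws else wd)).
by case: (i < n1)%N; rewrite /= !mulr_natr // addrC.
Qed.

Lemma sum_wgt :
  \sum_i \sum_j w i j = ws * (n1%:R ^+ 2 + n2%:R ^+ 2) + 2 * wd * n1%:R * n2%:R.
Proof.
under eq_bigr do rewrite sum_wgt_row.
rewrite (sum_by_community (fun b => if b then _ else _)) /=; ring.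
Qed.

Lemma expected_Rmat_regular_row (p q : agent) : (2 : R) != 0 -> is_regular p ->
  \sum_i \sum_j w i j * Rmat R nr1 ns1 nr2 ns2 i j p q =
  (p == q)%:R * (\sum_i \sum_j w i j - \sum_j w p j) + w p q.
Proof.
move=> two_neq0 reg_p.
under eq_bigr do under eq_bigr do rewrite Rmat_regular_row // mulrBr mulrCA.
rewrite (eq_bigr (fun i => \sum_j w i j * (p == q)%:R
   - 2^-1 * \sum_j w i j * (((p == i)%:R - (p == j)%:R) * ((q == i)%:R - (q == j)%:R))));
  last by move=> i _; rewrite sumrB mulr_sumr.
rewrite sumrB -mulr_sumr sum_sym_weight_diff; last exact: wgt_sym.
under eq_bigr do rewrite -mulr_suml.
by rewrite -mulr_suml mulrA mulVf // mul1r; ring.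
Qed.

Lemma reg_idx_lshift (a : 'I_nr1) : reg (lshift nr2 a) = lshift n2 (lshift ns1 a).
Proof. by rewrite /reg_idx (unsplitK (inl _ a)). Qed.

Lemma reg_idx_rshift (b : 'I_nr2) : reg (rshift nr1 b) = rshift n1 (lshift ns2 b).
Proof. by rewrite /reg_idx (unsplitK (inr _ b)). Qed.

Lemma stub_idx_lshift (a : 'I_ns1) : stub (lshift ns2 a) = lshift n2 (rshift nr1 a).
Proof. by rewrite /stub_idx (unsplitK (inl _ a)). Qed.

Lemma stub_idx_rshift (b : 'I_ns2) : stub (rshift ns1 b) = rshift n1 (rshift nr2 b).
Proof. by rewrite /stub_idx (unsplitK (inr _ b)). Qed.

Lemma is_reg_reg_idx k : is_regular (reg k).
Proof.
rewrite -[k]splitK; case: (split k) => a /=.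
  by rewrite reg_idx_lshift /is_reg (unsplitK (inl _ _)) /= ltn_ord.
by rewrite reg_idx_rshift /is_reg (unsplitK (inr _ _)) /= ltn_ord.
Qed.

Lemma Abar_entry k l :
  Abar R nr1 ns1 nr2 ns2 ws wd k l =
  \sum_i \sum_j w i j * Rmat R nr1 ns1 nr2 ns2 i j (reg k) (reg l).
Proof.
rewrite summxE; apply: eq_bigr => i _; rewrite summxE; apply: eq_bigr => j _.
by rewrite !mxE.
Qed.

Lemma Bbar_entry k l :
  Bbar R nr1 ns1 nr2 ns2 ws wd k l =
  \sum_i \sum_j w i j * Rmat R nr1 ns1 nr2 ns2 i j (reg k) (stub l).
Proof.
rewrite summxE; apply: eq_bigr => i _; rewrite summxE; apply: eq_bigr => j _.
by rewrite !mxE.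
Qed.

Local Notation a1 := (ws * n1%:R + wd * n2%:R).
Local Notation a2 := (ws * n2%:R + wd * n1%:R).

Lemma I_sub_Abar_block : (2 : R) != 0 ->
  ws * (n1%:R ^+ 2 + n2%:R ^+ 2) + 2 * wd * n1%:R * n2%:R = 1 ->
  1%:M - Abar R nr1 ns1 nr2 ns2 ws wd =
  block_mx (a1%:M - const_mx ws) (- const_mx wd) (- const_mx wd) (a2%:M - const_mx ws).
Proof.
move=> two_neq0 total_wgt; rewrite -[LHS]submxK.
congr block_mx; apply/matrixP => a b.
all: rewrite !mxE Abar_entry expected_Rmat_regular_row ?is_reg_reg_idx // sum_wgt total_wgt.
all: rewrite sum_wgt_row /wgt /same_comm ?reg_idx_lshift ?reg_idx_rshift.
all: rewrite ?(eq_lshift, eq_rshift, eq_lrshift, eq_rlshift) ?lshift_ltn ?rshift_ltnF /=.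
all: by rewrite ?mulrb; try case: ifP => _; ring.
Qed.

Lemma Bbar_block : (2 : R) != 0 ->
  Bbar R nr1 ns1 nr2 ns2 ws wd =
  block_mx (const_mx ws) (const_mx wd) (const_mx wd) (const_mx ws).
Proof.
move=> two_neq0; rewrite -[LHS]submxK.
congr block_mx; apply/matrixP => a b.
all: rewrite !mxE Bbar_entry expected_Rmat_regular_row ?is_reg_reg_idx //.
all: rewrite /wgt /same_comm ?reg_idx_lshift ?reg_idx_rshift ?stub_idx_lshift ?stub_idx_rshift.
all: rewrite ?(eq_lshift, eq_rshift, eq_lrshift, eq_rlshift) ?lshift_ltn ?rshift_ltnF /=.
all: by rewrite mul0r add0r.
Qed.

Lemma Bbar_mul_col (xs : 'cV[R]_(ns1 + ns2)) : (2 : R) != 0 ->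
  let sx1 := \sum_(k < ns1) xs (lshift ns2 k) 0 in
  let sx2 := \sum_(k < ns2) xs (rshift ns1 k) 0 in
  Bbar R nr1 ns1 nr2 ns2 ws wd *m xs =
  col_mx (const_mx (ws * sx1 + wd * sx2)) (const_mx (wd * sx1 + ws * sx2)).
Proof.
move=> two_neq0 sx1 sx2; rewrite Bbar_block // -[in LHS](vsubmxK xs) mul_block_col.
rewrite !mul_const_mx_col -!const_mxD.
by congr (col_mx (const_mx _) (const_mx _)); congr (_ * _ + _ * _);
  apply: eq_bigr => k _; rewrite mxE.
Qed.

End Gossip.

Lemma stubborn_delta_gt0 (R : realFieldType) (nr1 ns1 nr2 ns2 : nat) (ws wd : R) :
  0 < ws -> 0 < wd -> (0 < ns1 + ns2)%N ->
  0 < ws ^+ 2 * ns1%:R * ns2%:R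
      + ws * wd * ((nr1 + ns1)%:R * ns1%:R + (nr2 + ns2)%:R * ns2%:R)
      + wd ^+ 2 * ((nr1 + ns1)%:R * (nr2 + ns2)%:R - nr1%:R * nr2%:R).
Proof.
move=> ws_gt0 wd_gt0 ns_gt0.
have -> : (nr1 + ns1)%:R * (nr2 + ns2)%:R - nr1%:R * nr2%:R =
          (nr1 * ns2 + ns1 * nr2 + ns1 * ns2)%:R :> R.
  by rewrite !natrD !natrM; ring.
have : 0 < ws * wd * ((nr1 + ns1)%:R * ns1%:R + (nr2 + ns2)%:R * ns2%:R).
  rewrite -!natrM -natrD !mulr_gt0 // ltr0n.
  rewrite addn_gt0 !muln_gt0 !addn_gt0.
  by move: ns_gt0; rewrite addn_gt0 => /orP[]->; rewrite ?orbT.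
have : 0 <= ws ^+ 2 * ns1%:R * ns2%:R.
  exact: mulr_ge0 (mulr_ge0 (sqr_ge0 _) (ler0n _ _)) (ler0n _ _).
have : 0 <= wd ^+ 2 * (nr1 * ns2 + ns1 * nr2 + ns1 * ns2)%:R.
  exact: mulr_ge0 (sqr_ge0 _) (ler0n _ _).
lra.
Qed.

Theorem theorem3 (R : realFieldType) (nr1 ns1 nr2 ns2 : nat) (ws wd : R)
    (xs : 'cV[R]_(ns1 + ns2)) :
  let n1 := (nr1 + ns1)%N in
  let n2 := (nr2 + ns2)%N in
  let a1 := ws * n1%:R + wd * n2%:R in
  let a2 := ws * n2%:R + wd * n1%:R in
  let Ab := Abar R nr1 ns1 nr2 ns2 ws wd in
  let Bb := Bbar R nr1 ns1 nr2 ns2 ws wd in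
  let sx1 := \sum_(k < ns1) xs (lshift ns2 k) 0 in
  let sx2 := \sum_(k < ns2) xs (rshift ns1 k) 0 in
  let g11 := ws * wd * n1%:R + wd ^+ 2 * nr2%:R + ws ^+ 2 * ns2%:R in
  let g12 := wd * (wd * n1%:R + ws * n2%:R) in
  let g21 := ws * wd * n2%:R + wd ^+ 2 * nr1%:R + ws ^+ 2 * ns1%:R in
  let g22 := wd * (wd * n2%:R + ws * n1%:R) in
  let delta := ws ^+ 2 * ns1%:R * ns2%:R
               + ws * wd * (n1%:R * ns1%:R + n2%:R * ns2%:R)
               + wd ^+ 2 * (n1%:R * n2%:R - nr1%:R * nr2%:R) in
  let chi1 := delta^-1 * (g11 * sx1 + g12 * sx2) in
  let chi2 := delta^-1 * (g21 * sx2 + g22 * sx1) in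
  (0 < nr1)%N -> (0 < nr2)%N -> (nr1 + nr2 < n1 + n2)%N ->
  0 < ws -> 0 < wd -> ws != wd ->
  ws * (n1%:R ^+ 2 + n2%:R ^+ 2) + 2 * wd * n1%:R * n2%:R = 1 ->
  (exists wt1 wt2 wtd : R,
     (1%:M - Ab) \in unitmx /\
     invmx (1%:M - Ab) =
       block_mx (a1^-1 *: (1%:M - wt1 *: const_mx 1)) (const_mx wtd)
                (const_mx wtd) (a2^-1 *: (1%:M - wt2 *: const_mx 1)))
  /\ invmx (1%:M - Ab) *m Bb *m xs =
     col_mx (const_mx chi1 : 'cV[R]_nr1) (const_mx chi2 : 'cV[R]_nr2).
Proof.
move=> n1 n2 a1 a2 Ab Bb sx1 sx2 g11 g12 g21 g22 delta chi1 chi2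
  nr1_gt0 nr2_gt0 some_stubborn ws_gt0 wd_gt0 _ total_wgt.
have two_neq0 : (2 : R) != 0 by rewrite pnatr_eq0.
have a1_neq0 : a1 != 0.
  by rewrite gt_eqF // ltr_wpDr ?mulr_ge0 ?ler0n ?ltW // mulr_gt0 // ltr0n addn_gt0 nr1_gt0.
have a2_neq0 : a2 != 0.
  by rewrite gt_eqF // ltr_wpDr ?mulr_ge0 ?ler0n ?ltW // mulr_gt0 // ltr0n addn_gt0 nr2_gt0.
have delta_def : (a1 - ws * nr1%:R) * (a2 - ws * nr2%:R) - wd ^+ 2 * nr1%:R * nr2%:R = delta.
  by rewrite /a1 /a2 /delta /n1 /n2 !natrD; ring.
have d_neq0 : (a1 - ws * nr1%:R) * (a2 - ws * nr2%:R) - wd ^+ 2 * nr1%:R * nr2%:R != 0.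
  by rewrite delta_def gt_eqF // stubborn_delta_gt0 //; lia.
have IA : 1%:M - Ab = block_mx (a1%:M - const_mx ws) (- const_mx wd)
                               (- const_mx wd) (a2%:M - const_mx ws) by exact: I_sub_Abar_block.
have [IA_unit IA_inv] := invmx_block_scalar_const a1_neq0 a2_neq0 d_neq0.
split; first by do 3 eexists; rewrite IA; split; [exact: IA_unit | exact: IA_inv].
rewrite -mulmxA Bbar_mul_col // IA invmx_block_scalar_const_mul_col // delta_def.
rewrite -/sx1 -/sx2; congr (col_mx (const_mx _) (const_mx _)).
all: rewrite /chi1 /chi2 mulrC; congr (_ * _).
all: by rewrite /g11 /g12 /g21 /g22 /a1 /a2 /n1 /n2 !natrD; ring.
Qed.
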